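(* Let $\varepsilon>0$ and $c>0$ be constants, and let $\ell=\ell(n)$ be integers with $0\le \ell\le C_0 n^{1/2-\varepsilon}$ for some constant $C_0$. Then there is a constant $m$ (depending only on $\varepsilon,c$) such that, for all sufficiently large $n$, there is a randomized procedure $s$ with the following properties: on input $x\in\{0,1\}^n$ it queries $\mathrm{Jump}_\ell$ at $x$ and at at most $m$ further points, each sampled independently from a unary unbiased distribution applied to $x$; its output $s(x)$ depends only on the observed fitness values (and $n,\ell$); and for every $x\in\{0,1\}^n$, $\Pr[s(x)=|x|_1]\ge 1-O(n^{-c})$.
   Context: For $x\in\{0,1\}^n$ let $|x|_1=\sum_i x_i$. For an integer $0\le\ell<n/2$, $\mathrm{Jump}_\ell:\{0,1\}^n\to\mathbb{R}$ is defined by $\mathrm{Jump}_\ell(x)=n$ if $|x|_1=n$, $\mathrm{Jump}_\ell(x)=|x|_1$ if $\ell<|x|_1<n-\ell$, and $\mathrm{Jump}_\ell(x)=0$ otherwise. A unary unbiased distribution is a family $(D(\cdot\mid y))_{y\in\{0,1\}^n}$ of probability distributions on $\{0,1\}^n$ with $D(x\mid y)=D(x\oplus z\mid y\oplus z)$ for all $x,y,z$ ($\oplus$ = bitwise XOR) and $D(x\mid y)=D(\sigma(x)\mid\sigma(y))$ for all permutations $\sigma$ of $[n]$, where $\sigma(x)=x_{\sigma(1)}\cdots x_{\sigma(n)}$. *)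

From Stdlib Require Import Reals.
From mathcomp Require Import all_boot all_fingroup.

Set Implicit Arguments.
Unset Strict Implicit.
Unset Printing Implicit Defensive.

Definition bv (n : nat) := {ffun 'I_n -> bool}.

Definition ones (n : nat) (x : bv n) : nat := #|[pred i | x i]|.

Definition jump (n l : nat) (x : bv n) : R :=
  if ones x == n then INR n
  else if (l < ones x) && (ones x < n - l) then INR (ones x)
  else R0.

Definition bxor (n : nat) (x z : bv n) : bv n := [ffun i => xorb (x i) (z i)].

Definition bperm (n : nat) (s : {perm 'I_n}) (x : bv n) : bv n :=
  [ffun i => x (s i)].

Definition Rsum (T : finType) (P : pred T) (F : T -> R) : R :=
  \big[Rplus/R0]_(t : T | P t) F t.
Definition Rprod (m : nat) (F : 'I_m -> R) : R :=
  \big[Rmult/R1]_(i < m) F i.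

(* D x y = D(x | y): a family of probability distributions on {0,1}^n
   indexed by y, which is unary unbiased. *)
Definition unary_unbiased (n : nat) (D : bv n -> bv n -> R) : Prop :=
  (forall x y, Rle R0 (D x y)) /\
  (forall y, Rsum predT (fun x => D x y) = R1) /\
  (forall x y z, D x y = D (bxor x z) (bxor y z)) /\
  (forall x y (s : {perm 'I_n}), D x y = D (bperm s x) (bperm s y)).

(* Probability that the non-adaptive procedure that evaluates Jump_l at x,
   samples y_i ~ Ds i (. | x) independently (i < m), and outputs
   g (Jump_l x) (fun i => Jump_l y_i), outputs |x|_1. *)
Definition success_prob (n l m : nat) (Ds : 'I_m -> bv n -> bv n -> R)
    (g : R -> ('I_m -> R) -> nat) (x : bv n) : R :=
  Rsum (fun ys : {ffun 'I_m -> bv n} =>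
          g (jump l x) (fun i => jump l (ys i)) == ones x)
       (fun ys => Rprod (fun i => Ds i (ys i) x)).

(* Let every sample flip exactly l+1 uniformly chosen bits of x; this is a
   unary unbiased operator.  If Jump_l(x) <> 0, its value is |x|.  Otherwise
   |x| <= l or |x| >= n - l.  A sample flipping only zeros of x (resp. only ones)
   lands at |x| + l + 1 (resp. |x| - l - 1), which is visible when n >= 4l + 3,
   and no sample lands farther out on that side, so |x| is read off the extreme
   observed value.  A single sample misses this event with probability at most
   l(l+1)/n (union bound over the at most l offending bits), so m independent
   samples all miss it with probability at most (l(l+1)/n)^m = O(n^(-2 eps m)),
   which is O(n^-c) once 2 eps m >= c. *)

From HB Require Import structures.
From Stdlib Require Import Reals Lra Psatz ZArith.
From mathcomp Require Import all_boot all_fingroup zify.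

Set Implicit Arguments.
Unset Strict Implicit.
Unset Printing Implicit Defensive.

HB.instance Definition _ := Monoid.isComLaw.Build R R0 Rplus
  (fun a b c => esym (Rplus_assoc a b c)) Rplus_comm Rplus_0_l.
HB.instance Definition _ := Monoid.isComLaw.Build R R1 Rmult
  (fun a b c => esym (Rmult_assoc a b c)) Rmult_comm Rmult_1_l.
HB.instance Definition _ := Monoid.isMulLaw.Build R R0 Rmult Rmult_0_l Rmult_0_r.
HB.instance Definition _ :=
  Monoid.isAddLaw.Build R Rmult Rplus Rmult_plus_distr_r Rmult_plus_distr_l.

Section RealBigops.
Local Open Scope R_scope.

Lemma Rsum_le (T : finType) (P : pred T) (F G : T -> R) :
  (forall t, P t -> F t <= G t) -> Rsum P F <= Rsum P G.
Proof.
move=> FG; apply: (big_ind2 Rle); [exact: Rle_refl | move=> *; lra | exact: FG].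
Qed.

Lemma Rsum_ge0 (T : finType) (P : pred T) (F : T -> R) :
  (forall t, P t -> 0 <= F t) -> 0 <= Rsum P F.
Proof. by move=> F0; apply: (big_ind (Rle R0)); [lra | move=> *; lra | ]. Qed.

Lemma big_Rplus_const (T : finType) (P : pred T) (a : R) :
  \big[Rplus/R0]_(t | P t) a = INR #|P| * a.
Proof.
rewrite big_const; elim: #|P| => [|k IH] /=; first by rewrite Rmult_0_l.
by rewrite IH -/(INR k.+1) S_INR; ring.
Qed.

Lemma Rprod_ge0 m (F : 'I_m -> R) :
  (forall i, 0 <= F i) -> 0 <= Rprod F.
Proof.
by move=> F0; apply: (big_ind (Rle R0)); [lra | move=> *; apply: Rmult_le_pos | ].
Qed.

Lemma Rprod_le_pow m (F : 'I_m -> R) (q : R) :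
  (forall i, 0 <= F i <= q) -> Rprod F <= q ^ m.
Proof.
move=> Fq; have ->: q ^ m = Rprod (fun _ : 'I_m => q).
  by rewrite /Rprod big_const_ord; elim: m {F Fq} => //= k ->.
suff [] : 0 <= Rprod F /\ Rprod F <= Rprod (fun _ : 'I_m => q) by [].
apply: (big_ind2 (fun u v => 0 <= u /\ u <= v)).
- by split; [lra | exact: Rle_refl].
- move=> u1 u2 v1 v2 [? ?] [? ?]; split; first exact: Rmult_le_pos.
  exact: Rmult_le_compat.
- by move=> i _; apply: Fq.
Qed.

Lemma Rsum_family_Rprod (J : finType) m (F : pred J) (D : 'I_m -> J -> R) :
  Rsum (fun ys : {ffun 'I_m -> J} => [forall i, F (ys i)])
       (fun ys => Rprod (fun i => D i (ys i)))
  = Rprod (fun i => Rsum F (D i)).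
Proof.
rewrite /Rsum /Rprod bigA_distr_big; apply: eq_bigl => ys.
by apply/forallP/familyP.
Qed.

End RealBigops.

Lemma card_bigcup_le (T I : finType) (P : pred I) (S : I -> {set T}) :
  #|\bigcup_(i | P i) S i| <= \sum_(i | P i) #|S i|.
Proof.
elim/big_rec2: _ => [|i k U _ le]; first by rewrite cards0.
by rewrite (leq_trans (leq_card_setU (S i) U).1) ?leq_add2l.
Qed.

Section BitStrings.
Variable n : nat.
Implicit Types x y z : bv n.

Definition supp z : {set 'I_n} := [set i | z i].

Lemma ones_supp z : ones z = #|supp z|.
Proof. by rewrite /ones /supp cardsE. Qed.

Lemma ones_le z : ones z <= n.
Proof. by rewrite ones_supp (leq_trans (max_card _)) ?card_ord. Qed.

Lemma supp_inj : injective supp.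
Proof.
move=> y z eq_yz; apply/ffunP => i.
by have := congr1 (fun A : {set 'I_n} => i \in A) eq_yz; rewrite !inE.
Qed.

Lemma card_ones_eq d : #|[set z : bv n | ones z == d]| = 'C(n, d).
Proof.
rewrite -(card_imset _ supp_inj) -[in RHS](card_ord n) -card_draws.
apply: eq_card => A; rewrite !inE; apply/imsetP/idP.
  by case=> z; rewrite inE ones_supp => /eqP <- ->.
have suppA : supp [ffun i => i \in A] = A by apply/setP => i; rewrite !inE ffunE.
by move=> cardA; exists [ffun i => i \in A]; rewrite // inE ones_supp suppA.
Qed.

Lemma bxorK x : cancel (bxor x) (bxor x).
Proof. by move=> z; apply/ffunP => i; rewrite !ffunE; case: (x i); case: (z i). Qed.

Lemma bxor_inj x : injective (bxor x).
Proof. exact: can_inj (bxorK x). Qed.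

Lemma supp_bxor x z :
  supp (bxor x z) = (supp x :\: supp z) :|: (supp z :\: supp x).
Proof. by apply/setP => i; rewrite !inE ffunE; case: (x i); case: (z i). Qed.

Lemma ones_bxor x z : ones (bxor x z) + 2 * #|supp x :&: supp z| = ones x + ones z.
Proof.
have meetD0 : (supp x :\: supp z) :&: (supp z :\: supp x) = set0.
  by apply/setP => i; rewrite !inE; case: (x i); case: (z i).
rewrite !ones_supp supp_bxor cardsU meetD0 cards0 subn0 !cardsD [supp z :&: _]setIC.
have := subset_leq_card (subsetIl (supp x) (supp z)).
have := subset_leq_card (subsetIr (supp x) (supp z)).
lia.
Qed.

Lemma ones_bxor_le x z : ones (bxor x z) <= ones x + ones z.
Proof. by rewrite -ones_bxor leq_addr. Qed.

Lemma ones_le_bxor x z : ones x <= ones (bxor x z) + ones z.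
Proof.
have := ones_bxor x z; have := subset_leq_card (subsetIr (supp x) (supp z)).
rewrite -ones_supp; lia.
Qed.

Lemma ones_bxor_disjoint x z :
  [disjoint supp x & supp z] -> ones (bxor x z) = ones x + ones z.
Proof.
rewrite -setI_eq0 => /eqP xz0; have := ones_bxor x z; rewrite xz0 cards0; lia.
Qed.

Lemma ones_bxor_subset x z :
  supp z \subset supp x -> ones (bxor x z) + ones z = ones x.
Proof.
move=> /setIidPr zx; have := ones_bxor x z; rewrite zx -ones_supp; lia.
Qed.

Lemma ones_bperm (s : {perm 'I_n}) z : ones (bperm s z) = ones z.
Proof.
rewrite !ones_supp -(card_preimset (supp z) (@perm_inj _ s)); apply: eq_card => i.
by rewrite !inE ffunE.
Qed.

Lemma bpermK (s : {perm 'I_n}) : cancel (bperm s) (bperm s^-1).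
Proof. by move=> z; apply/ffunP => i; rewrite !ffunE permKV. Qed.

Lemma card_ones_eq_at d i :
  n * #|[set z : bv n | (ones z == d) && z i]| = d * 'C(n, d).
Proof.
pose c j := #|[set z : bv n | (ones z == d) && z j]|.
have c_const j : c j = c i.
  rewrite /c -(card_preimset _ (can_inj (bpermK (tperm i j)))); apply: eq_card => z.
  by rewrite !inE ones_bperm ffunE tpermR.
have sum_c : \sum_(j < n) c j = d * 'C(n, d).
  rewrite -card_ones_eq -sum1_card big_distrr /= muln1.
  transitivity (\sum_(j < n) \sum_(z : bv n | ones z == d) (z j : nat)).
    rewrite /c; apply: eq_bigr => j _; rewrite -sum1_card big_mkcond [RHS]big_mkcond /=.
    by apply: eq_bigr => z _; rewrite inE; case: (ones z == d); case: (z j).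
  rewrite exchange_big /=; apply: eq_big => [z|z /eqP <-]; first by rewrite inE.
  rewrite /ones -sum1_card [RHS]big_mkcond /=.
  by apply: eq_bigr => j _; rewrite inE; case: (z j).
by rewrite -sum_c (eq_bigr (fun=> c i)) ?sum_nat_const ?card_ord // => j _.
Qed.

Lemma card_ones_eq_meet d (A : {set 'I_n}) :
  n * #|[set z : bv n | (ones z == d) && ~~ [disjoint supp z & A]]|
    <= #|A| * (d * 'C(n, d)).
Proof.
pose S j := [set z : bv n | (ones z == d) && z j].
apply: (@leq_trans (n * \sum_(j in A) #|S j|)).
  rewrite leq_mul2l (leq_trans _ (card_bigcup_le _ _)) ?orbT //.
  apply/subset_leq_card/subsetP => z; rewrite inE => /andP [zd].
  rewrite -setI_eq0 => /set0Pn [j]; rewrite !inE => /andP [zj jA].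
  by apply/bigcupP; exists j; rewrite // inE zd.
by rewrite big_distrr /= (eq_bigr (fun=> d * 'C(n, d))) ?sum_nat_const // => j _;
  apply: card_ones_eq_at.
Qed.
End BitStrings.

Section UniformFlip.
Local Open Scope R_scope.
Variables n d : nat.

Definition uniform_flip (y x : bv n) : R :=
  if ones (bxor x y) == d then / INR 'C(n, d) else 0.

Lemma Rsum_uniform_flip (P : pred (bv n)) x :
  Rsum P (uniform_flip ^~ x)
  = INR #|[set z | P (bxor x z) && (ones z == d)]| / INR 'C(n, d).
Proof.
rewrite /Rsum /uniform_flip -big_mkcondr big_Rplus_const.
congr (INR _ * _); rewrite -(card_preimset _ (@bxor_inj n x)).
by apply: eq_card => y; rewrite !inE bxorK.
Qed.

Hypothesis d_le_n : (d <= n)%N.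

Lemma binomial_pos : 0 < INR 'C(n, d).
Proof. by apply: lt_0_INR; apply/ltP; rewrite bin_gt0. Qed.

Lemma uniform_flip_ge0 y x : 0 <= uniform_flip y x.
Proof.
rewrite /uniform_flip; case: ifP => _; last exact: Rle_refl.
by left; apply: Rinv_0_lt_compat; apply: binomial_pos.
Qed.

Lemma uniform_flip_unary_unbiased : unary_unbiased uniform_flip.
Proof.
split; [exact: uniform_flip_ge0 | split; [|split]].
- move=> x; rewrite Rsum_uniform_flip.
  rewrite (eq_card (B := [set z | ones z == d])) ?card_ones_eq; last first.
    by move=> z; rewrite !inE.
  by apply: Rinv_r; apply: Rgt_not_eq; apply: binomial_pos.
- move=> y x z; rewrite /uniform_flip.
  suff ->: bxor (bxor x z) (bxor y z) = bxor x y by [].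
  by apply/ffunP => i; rewrite !ffunE; case: (x i); case: (y i); case: (z i).
- move=> y x s; rewrite /uniform_flip.
  suff ->: bxor (bperm s x) (bperm s y) = bperm s (bxor x y) by rewrite ones_bperm.
  by apply/ffunP => i; rewrite !ffunE.
Qed.

Lemma uniform_flip_meet_le (A : {set 'I_n}) x : (0 < n)%N ->
  Rsum (fun y => ~~ [disjoint supp (bxor x y) & A]) (uniform_flip ^~ x)
  <= INR (#|A| * d) / INR n.
Proof.
move=> n_gt0; rewrite Rsum_uniform_flip.
set S := #|_|.
have card_S : (n * S <= #|A| * d * 'C(n, d))%N.
  rewrite -mulnA (leq_trans _ (card_ones_eq_meet d A)) // leq_mul2l.
  apply/orP; right; apply: subset_leq_card.
  by apply/subsetP => z; rewrite !inE bxorK andbC.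
have n_pos : 0 < INR n by apply: lt_0_INR; apply/ltP.
have C_pos := binomial_pos.
apply: (Rmult_le_reg_r (INR n * INR 'C(n, d))); first exact: Rmult_lt_0_compat.
have -> : INR S / INR 'C(n, d) * (INR n * INR 'C(n, d)) = INR (n * S).
  by rewrite mult_INR; field; apply: Rgt_not_eq.
have -> : INR (#|A| * d) / INR n * (INR n * INR 'C(n, d)) = INR (#|A| * d * 'C(n, d)).
  by rewrite [in RHS]mult_INR; field; apply: Rgt_not_eq.
by apply: le_INR; apply/leP.
Qed.
End UniformFlip.

Lemma bigmax_attained (I : finType) (P : pred I) (F : I -> nat) i0 k :
  P i0 -> F i0 = k -> (forall i, P i -> F i <= k) -> \max_(i | P i) F i = k.
Proof.
move=> Pi0 Fi0 Fk; apply/eqP; rewrite eqn_leq; apply/andP; split.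
  exact/bigmax_leqP.
by rewrite -{1}Fi0; apply: leq_bigmax_cond.
Qed.

Section Decoder.
Variables n l : nat.
Implicit Types x y : bv n.

Definition jump_nat y : nat :=
  if ones y == n then n else if (l < ones y) && (ones y < n - l) then ones y else 0.

Lemma jumpE y : jump l y = INR (jump_nat y).
Proof. by rewrite /jump /jump_nat; case: ifP => // _; case: ifP. Qed.

Lemma jump_nat_cases y : [\/ jump_nat y = 0, jump_nat y = n | jump_nat y = ones y].
Proof. by rewrite /jump_nat; case: ifP => _; [|case: ifP => _]; constructor. Qed.

Lemma jump_nat_gap y : l < ones y < n - l -> jump_nat y = ones y.
Proof.
by move=> gap; rewrite /jump_nat gap; case: eqP => // ->; rewrite ltnn andbF in gap.
Qed.

Lemma jump_nat_neq0 y : jump_nat y != 0 -> jump_nat y = ones y.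
Proof. by rewrite /jump_nat; case: ifP => [/eqP -> //|_]; case: ifP. Qed.

Lemma jump_nat_eq0 y : jump_nat y = 0 -> ones y <= l \/ n - l <= ones y < n.
Proof.
have := ones_le y; rewrite /jump_nat; case: eqP => [-> _ n0|y_ne y_le]; first by lia.
case: ifP => [_ y0|/negbT]; first by lia.
by rewrite negb_and -!leqNgt => /orP []; lia.
Qed.

Variable m : nat.

(* [a] is the value at [x], [u] the values at the samples.  For [x] near [0^n]
   the answer is the largest visible value below [n/2], minus [l+1]; for [x]
   near [1^n] it is the smallest value in [[n/2, n)], i.e. [n - max (n - u i)],
   plus [l+1]. *)
Definition decode (a : nat) (u : 'I_m -> nat) : nat :=
  if a != 0 then a
  else if [exists i, (0 < u i) && (2 * u i < n)] then \max_(i | 2 * u i < n) u i - l.+1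
  else n - \max_(i | (n <= 2 * u i) && (u i < n)) (n - u i) + l.+1.

Lemma decode_low (u : 'I_m -> nat) k i0 :
  2 * (k + l.+1) < n -> u i0 = k + l.+1 ->
  (forall i, 2 * u i < n -> u i <= k + l.+1) -> decode 0 u = k.
Proof.
move=> k_low ui0 u_le; rewrite /decode /=.
have -> : [exists i, (0 < u i) && (2 * u i < n)].
  by apply/existsP; exists i0; rewrite ui0; apply/andP; split; lia.
by rewrite (@bigmax_attained _ _ _ i0 (k + l.+1)) ?addnK // ui0.
Qed.

Lemma decode_high (u : 'I_m -> nat) k i0 :
  n <= 2 * (k - l.+1) -> l < k -> k - l.+1 < n -> u i0 = k - l.+1 ->
  (forall i, 0 < u i -> k - l.+1 <= u i) -> decode 0 u = k.
Proof.
move=> k_high l_lt_k k_lt_n ui0 u_ge; rewrite /decode /=.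
have -> : [exists i, (0 < u i) && (2 * u i < n)] = false.
  apply/negbTE/existsPn => i; apply/negP => /andP [/u_ge]; lia.
rewrite (@bigmax_attained _ _ _ i0 (n - (k - l.+1))); first by lia.
- by rewrite ui0; apply/andP; split.
- by rewrite ui0.
- by move=> i /andP [n_le ui_lt]; have := u_ge i; lia.
Qed.

(* The bits whose flip moves [x] away from the middle. *)
Definition blocking x : {set 'I_n} := if ones x <= l then supp x else ~: supp x.

Lemma card_blocking x : jump_nat x = 0 -> #|blocking x| <= l.
Proof.
rewrite /blocking => /jump_nat_eq0; case: ifP => [x_low _|_ [//|x_high]].
  by rewrite -ones_supp.
by have := cardsC (supp x); rewrite card_ord -ones_supp; lia.
Qed.

Lemma decode_correct x (ys : 'I_m -> bv n) (u : 'I_m -> nat) :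
  4 * l + 3 <= n -> jump_nat x = 0 -> (forall i, u i = jump_nat (ys i)) ->
  (forall i, ones (bxor x (ys i)) = l.+1) ->
  (exists i0, [disjoint supp (bxor x (ys i0)) & blocking x]) ->
  decode 0 u = ones x.
Proof.
move=> n_large x0 uE flips [i0 unblocked].
have ys_le i : ones (ys i) <= ones x + l.+1.
  by rewrite -(flips i) -{1}(bxorK x (ys i)); apply: ones_bxor_le.
have ys_ge i : ones x <= ones (ys i) + l.+1.
  by rewrite -(flips i) -{1}(bxorK x (ys i)); apply: ones_le_bxor.
move: unblocked; rewrite /blocking; case: (jump_nat_eq0 x0) => [x_low|x_high].
- rewrite x_low disjoint_sym => /ones_bxor_disjoint; rewrite bxorK flips => ys0.
  apply: (@decode_low _ _ i0); first by lia.
    by rewrite uE jump_nat_gap ys0 //; lia.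
  move=> i; rewrite uE; case: (jump_nat_cases (ys i)) => ->; have := ys_le i; lia.
- have -> : (ones x <= l) = false by lia.
  rewrite disjoints_subset setCK => /ones_bxor_subset; rewrite bxorK flips => ys0.
  apply: (@decode_high _ _ i0); try lia.
    by rewrite uE jump_nat_gap; lia.
  move=> i; rewrite uE; case: (jump_nat_cases (ys i)) => ->; have := ys_ge i; lia.
Qed.
End Decoder.

Section SuccessProbability.
Local Open Scope R_scope.
Variables (n l m : nat) (Ds : 'I_m -> bv n -> bv n -> R).
Variables (g : R -> ('I_m -> R) -> nat) (x : bv n).
Hypothesis Ds_ge0 : forall i y, 0 <= Ds i y x.
Hypothesis Ds_total : forall i, Rsum predT (Ds i ^~ x) = 1.

Let P (ys : {ffun 'I_m -> bv n}) := Rprod (fun i => Ds i (ys i) x).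
Let succeeds (ys : {ffun 'I_m -> bv n}) :=
  g (jump l x) (fun i => jump l (ys i)) == ones x.

Let P_ge0 ys : 0 <= P ys.
Proof. by apply: Rprod_ge0 => i; apply: Ds_ge0. Qed.

Lemma success_prob_complement :
  success_prob l Ds g x = 1 - Rsum (fun ys => ~~ succeeds ys) P.
Proof.
have total : Rsum predT P = 1.
  rewrite /Rsum (eq_bigl (fun ys : {ffun 'I_m -> bv n} => [forall i, predT (ys i)]));
    last by move=> ys; apply/esym/forallP.
  apply: etrans (Rsum_family_Rprod predT (fun i y => Ds i y x)) _.
  by rewrite /Rprod big1.
rewrite /Rsum (bigID succeeds) /= in total.
change (Rsum succeeds P = 1 - Rsum (fun ys => ~~ succeeds ys) P).
by rewrite /Rsum -total /Rminus Rplus_assoc Rplus_opp_r Rplus_0_r.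
Qed.

(* Up to samples outside [S], which have probability zero, failure forces every
   sample into [F]; by independence this has probability at most [q ^ m]. *)
Lemma success_prob_ge (S F : pred (bv n)) (q : R) :
  (forall i y, ~~ S y -> Ds i y x = 0) ->
  (forall i, Rsum F (Ds i ^~ x) <= q) ->
  (forall ys : {ffun 'I_m -> bv n},
     (forall i, S (ys i)) -> (exists i, ~~ F (ys i)) ->
     g (jump l x) (fun i => jump l (ys i)) = ones x) ->
  1 - q ^ m <= success_prob l Ds g x.
Proof.
move=> outside_S F_le succ; rewrite success_prob_complement.
suff : Rsum (fun ys => ~~ succeeds ys) P <= q ^ m by lra.
apply: (@Rle_trans _ (Rsum (fun ys : {ffun 'I_m -> bv n} => [forall i, F (ys i)]) P)).
  rewrite /Rsum [X in X <= _]big_mkcond [X in _ <= X]big_mkcond /=.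
  apply: Rsum_le => ys _; case: ifP => [fails|_]; last first.
    by case: ifP => _; [apply: P_ge0 | apply: Rle_refl].
  case: ifP => [_|/negbT]; first exact: Rle_refl.
  rewrite negb_forall => /existsP [i0 notF].
  case: (boolP [forall i, S (ys i)]) => [/forallP inS|].
    by move/negP: fails; case; apply/eqP; apply: succ => //; exists i0.
  rewrite negb_forall => /existsP [i1 notS].
  by rewrite /P /Rprod (bigD1 i1) //= outside_S // Rmult_0_l; apply: Rle_refl.
apply: Rle_trans (Req_le _ _ (Rsum_family_Rprod F (fun i y => Ds i y x))) _.
apply: Rprod_le_pow => i; split; last exact: F_le.
by apply: Rsum_ge0 => y _; apply: Ds_ge0.
Qed.
End SuccessProbability.

Definition nat_of_R (r : R) : nat := Z.to_nat (Zfloor r).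

Lemma nat_of_R_INR k : nat_of_R (INR k) = k.
Proof. by rewrite /nat_of_R INR_IZR_INZ ZfloorZ Nat2Z.id. Qed.

Definition jump_decoder n l m (a : R) (vs : 'I_m -> R) : nat :=
  decode n l (nat_of_R a) (fun i => nat_of_R (vs i)).

Section JumpProcedure.
Local Open Scope R_scope.

Lemma success_prob_uniform_flip n l m (x : bv n) : (4 * l + 3 <= n)%N ->
  1 - (INR (l * l.+1) / INR n) ^ m
  <= success_prob l (fun _ : 'I_m => uniform_flip l.+1) (@jump_decoder n l m) x.
Proof.
move=> n_large; have d_le_n : (l.+1 <= n)%N by lia.
have n_pos : 0 < INR n by apply: lt_0_INR; apply/ltP; lia.
have q_ge0 : 0 <= INR (l * l.+1) / INR n.
  by apply: Rmult_le_pos; [apply: pos_INR | left; apply: Rinv_0_lt_compat].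
have decodeE (ys : {ffun 'I_m -> bv n}) :
  @jump_decoder n l m (jump l x) (fun i => jump l (ys i))
  = decode n l (jump_nat l x) (fun i => nat_of_R (jump l (ys i))).
  by rewrite /jump_decoder jumpE nat_of_R_INR.
have [_ [total _]] := uniform_flip_unary_unbiased d_le_n.
case: (eqVneq (jump_nat l x) 0%N) => [x0|x_ne0].
- apply: (@success_prob_ge _ _ _ _ _ _ _ _
    (fun y => ones (bxor x y) == l.+1)
    (fun y => ~~ [disjoint supp (bxor x y) & blocking l x])).
  + by move=> _ y; apply: uniform_flip_ge0.
  + by move=> _; apply: total.
  + by move=> _ y /negbTE y_out; rewrite /uniform_flip y_out.
  + move=> _; apply: Rle_trans (uniform_flip_meet_le d_le_n _ _ _) _; first by lia.
    apply: Rmult_le_compat_r; first by left; apply: Rinv_0_lt_compat.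
    by apply: le_INR; apply/leP; rewrite leq_mul2r card_blocking ?orbT.
  + move=> ys inS [i0 unblocked]; rewrite decodeE x0.
    apply: (decode_correct (ys := ys)) => //.
    - by move=> i; rewrite jumpE nat_of_R_INR.
    - by move=> i; apply/eqP.
    - by exists i0; apply/negPn.
- apply: (@success_prob_ge _ _ _ _ _ _ _ _ predT pred0).
  + by move=> _ y; apply: uniform_flip_ge0.
  + by move=> _; apply: total.
  + by [].
  + by move=> _; rewrite /Rsum big_pred0.
  + by move=> ys _ _; rewrite decodeE /decode x_ne0 jump_nat_neq0.
Qed.
End JumpProcedure.

Section Asymptotics.
Local Open Scope R_scope.

Lemma Rpower_le_sqrt x a : 1 <= x -> a <= / 2 -> Rpower x a <= sqrt x.
Proof. by move=> x_ge1 a_le; rewrite -Rpower_sqrt; [apply: Rle_Rpower | lra]. Qed.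

Lemma small_gap_of_sqrt_bound (C0 a : R) (L n : nat) : a <= / 2 -> (1 <= n)%N ->
  INR L <= C0 * Rpower (INR n) a -> (4 * Rabs C0 + 3) ^ 2 <= INR n ->
  (4 * L + 3 <= n)%N.
Proof.
move=> a_le n_ge1 L_le n_large.
have n_ge1' : 1 <= INR n by apply: (le_INR 1); apply/leP.
have C0_abs := Rabs_pos C0.
have sqrt_large : 4 * Rabs C0 + 3 <= sqrt (INR n).
  by rewrite -(sqrt_pow2 (4 * Rabs C0 + 3)); [apply: sqrt_le_1_alt | lra].
have L_le_sqrt : INR L <= Rabs C0 * sqrt (INR n).
  apply: Rle_trans L_le _; apply: Rle_trans (Rmult_le_compat_r _ _ _ _ (RRle_abs C0)) _.
    by left; apply: exp_pos.
  by apply: Rmult_le_compat_l => //; apply: Rpower_le_sqrt.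
have sqrt_sq := sqrt_sqrt (INR n) ltac:(lra).
suff : INR (4 * L + 3) <= INR n by move/INR_le/leP.
rewrite plus_INR mult_INR /=; nra.
Qed.

Lemma eventually_small_gap (C0 a : R) : a <= / 2 ->
  exists N : nat, forall L n : nat, (N <= n)%N ->
    INR L <= C0 * Rpower (INR n) a -> (4 * L + 3 <= n)%N.
Proof.
move=> a_le; have [N N_large] := INR_unbounded ((4 * Rabs C0 + 3) ^ 2).
exists N.+1 => L n n_ge L_le; apply: small_gap_of_sqrt_bound L_le _ => //.
  exact: leq_trans n_ge.
have N_le_n : INR N <= INR n by apply: le_INR; apply/leP; exact: ltnW.
lra.
Qed.

Lemma exists_exponent (eps c : R) : 0 < eps -> exists m : nat, c <= 2 * eps * INR m.
Proof.
move=> eps_pos; have [m m_large] := INR_unbounded (c / (2 * eps)).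
exists m; apply: Rlt_le; rewrite Rmult_comm.
apply: (Rmult_lt_reg_r (/ (2 * eps))); first by apply: Rinv_0_lt_compat; lra.
by field_simplify; lra.
Qed.

Lemma failure_bound (C0 eps c : R) (L n m : nat) :
  0 < eps -> c <= 2 * eps * INR m -> (1 <= n)%N ->
  INR L <= C0 * Rpower (INR n) (/ INR 2 - eps) ->
  (INR (L * L.+1) / INR n) ^ m <= (2 * (C0 * C0)) ^ m * Rpower (INR n) (- c).
Proof.
move=> eps_pos c_le n_ge1 L_le.
have n_ge1' : 1 <= INR n by apply: (le_INR 1); apply/leP.
have n_pos : 0 < INR n by lra.
set t := Rpower (INR n) (/ INR 2 - eps) in L_le.
set s := Rpower (INR n) (- (2 * eps)).
have t_sq : t * t = INR n * s.
  rewrite /t /s -Rpower_plus -{2}(Rpower_1 (INR n)) // -Rpower_plus.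
  by congr Rpower; rewrite /=; field.
have L_ge0 := pos_INR L.
have q_le : INR (L * L.+1) / INR n <= 2 * (C0 * C0) * s.
  apply: (Rmult_le_reg_r (INR n)) => //.
  rewrite /Rdiv Rmult_assoc Rinv_l; last exact: Rgt_not_eq.
  rewrite Rmult_1_r mult_INR S_INR Rmult_assoc (Rmult_comm s) -t_sq.
  (* L (L + 1) <= 2 L^2 <= 2 C0^2 t^2 once L >= 1. *)
  case: L L_le L_ge0 => [|L'] L_le L_ge0; first by rewrite /=; nra.
  have : 1 <= INR L'.+1 by apply: (le_INR 1); apply/leP.
  have : 0 < t by apply: exp_pos.
  nra.
apply: Rle_trans (pow_incr _ _ m (conj _ q_le)) _.
  by apply: Rmult_le_pos; [apply: pos_INR | left; apply: Rinv_0_lt_compat].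
rewrite Rpow_mult_distr; apply: Rmult_le_compat_l; first by apply: pow_le; nra.
rewrite /s -Rpower_pow; last exact: exp_pos.
by rewrite Rpower_mult; apply: Rle_Rpower => //; nra.
Qed.
End Asymptotics.

Theorem lemma3 :
  forall eps c : R, Rlt R0 eps -> Rlt R0 c ->
  exists m : nat,
  forall (C0 : R) (l : nat -> nat),
    (forall n : nat,
       Rle (INR (l n)) (Rmult C0 (Rpower (INR n) (Rminus (Rinv (INR 2)) eps)))) ->
    exists (K : R) (N0 : nat),
    forall n : nat, (N0 <= n)%N ->
      exists (Ds : 'I_m -> bv n -> bv n -> R) (g : R -> ('I_m -> R) -> nat),
        (forall i, unary_unbiased (Ds i)) /\
        (forall x : bv n,
           Rle (Rminus R1 (Rmult K (Rpower (INR n) (Ropp c))))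
               (success_prob (l n) Ds g x)).
Proof.
move=> eps c eps_pos c_pos; have [m c_le] := exists_exponent c eps_pos.
exists m => C0 l l_bound.
have [N small_gap] := @eventually_small_gap C0 (/ INR 2 - eps) ltac:(simpl; lra).
exists (pow (Rmult (IZR 2) (Rmult C0 C0)) m), N.+1 => n n_ge.
have n_large : (4 * l n + 3 <= n)%N := small_gap _ _ (ltnW n_ge) (l_bound n).
exists (fun _ => uniform_flip (l n).+1), (@jump_decoder n (l n) m); split.
  by move=> _; apply: uniform_flip_unary_unbiased; lia.
move=> x; apply: Rle_trans (success_prob_uniform_flip m x n_large).
have := failure_bound eps_pos c_le (leq_trans (ltn0Sn N) n_ge) (l_bound n); lra.
Qed.
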